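(* Let $\kappa$ be a cardinal and let $\{X_\alpha\}_{\alpha\in\mathbb I}$ be a $\kappa$-long directed family of topological spaces, with union $X=\bigcup_{\alpha}X_\alpha$. For an admissible topology $\mathscr S$ on $X$, the following are equivalent: (i) $t(X,\mathscr S)\leq\kappa$; (ii) $\mathscr S=\mathscr T$, where $\mathscr T$ is the colimit space topology, and $t(X_\alpha,\mathscr S)\leq\kappa$ for all $\alpha\in\mathbb I$.
   Context: A directed family of spaces $\{X_\alpha\}_{\alpha\in\mathbb I}$ here consists of spaces with $X_\alpha\subseteq X_\beta$ for $\alpha\leq\beta$, the bonding maps being the inclusions (continuous). It is $\kappa$-long if every subset $C\subseteq\mathbb I$ with $|C|\leq\kappa$ has an upper bound in $\mathbb I$. The colimit space topology on $X$ is $\mathscr T=\{U\subseteq X\mid U\cap X_\alpha\text{ open in }X_\alpha\ \forall\alpha\}$. A topology $\mathscr S$ on $X$ is admissible if every inclusion $X_\alpha\to(X,\mathscr S)$ is a topological embedding. The tightness $t(Y)$ of a space $Y$ is the least cardinal $\lambda$ such that whenever $p\in\operatorname{cl}A$ for $A\subseteq Y$, there is $C\subseteq A$ with $|C|\leq\lambda$ and $p\in\operatorname{cl}C$. $t(X_\alpha,\mathscr S)$ denotes the tightness of $X_\alpha$ with the subspace topology from $\mathscr S$. *)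

From mathcomp Require Import all_boot.
From mathcomp Require Import boolp classical_sets cardinality.
Set Implicit Arguments. Unset Strict Implicit. Unset Printing Implicit Defensive.
Local Open Scope classical_set_scope.

Definition is_topology {T : Type} (Y : set T) (O : set (set T)) : Prop :=
  [/\ (forall U, O U -> U `<=` Y), O set0, O Y,
      (forall U V, O U -> O V -> O (U `&` V)) &
      (forall F : set (set T), F `<=` O -> O (\bigcup_(U in F) U))].

Definition subspace_top {T : Type} (S : set (set T)) (Y : set T) : set (set T) :=
  [set U | exists V, S V /\ U = V `&` Y].

Definition in_closure {T : Type} (O : set (set T)) (A : set T) (p : T) : Prop :=
  forall U, O U -> U p -> U `&` A !=set0.

(* tightness of the space (Y, O) is at most the cardinal |K| *)
Definition tightness_le {T : Type} (Y : set T) (O : set (set T)) (K : Type) : Prop :=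
  forall (A : set T) (p : T), A `<=` Y -> Y p -> in_closure O A p ->
    exists C : set T, [/\ C `<=` A, (C #<= [set: K])%card & in_closure O C p].

Definition colimit_top {I T : Type} (Xa : I -> set T) (tau : I -> set (set T))
  : set (set T) :=
  [set U | forall a, tau a (U `&` Xa a)].

Definition admissible {I T : Type} (Xa : I -> set T) (tau : I -> set (set T))
  (S : set (set T)) : Prop :=
  forall a, subspace_top S (Xa a) = tau a.

Definition kappa_long {I : Type} (le : I -> I -> Prop) (K : Type) : Prop :=
  forall C : set I, (C #<= [set: K])%card -> exists b, forall a, C a -> le a b.

(* directed family of spaces X_a (open sets tau a), bonding maps = inclusions
   (continuous), with union the whole type T *)
Definition directed_family {I T : Type} (le : I -> I -> Prop)
  (Xa : I -> set T) (tau : I -> set (set T)) : Prop :=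
  (forall a, le a a) /\ (forall a b c, le a b -> le b c -> le a c) /\
  (exists a : I, True) /\ (forall a b, exists c, le a c /\ le b c) /\
  (forall a, is_topology (Xa a) (tau a)) /\
  (forall a b, le a b -> Xa a `<=` Xa b) /\
  (forall a b U, le a b -> tau b U -> tau a (U `&` Xa a)) /\
  \bigcup_a Xa a = [set: T].

From mathcomp Require Import all_boot.
From mathcomp Require Import boolp classical_sets cardinality.
Set Implicit Arguments. Unset Strict Implicit. Unset Printing Implicit Defensive.
Local Open Scope classical_set_scope.

(* (i) => (ii): a set U open in the colimit topology but not S-open would have
   a point q in the S-closure of its complement, hence in the closure of a
   kappa-small part C of that complement; by kappa-longness C and q lie in a
   single X_c, where U is S-open relative to X_c, a contradiction.
   (ii) => (i): the kappa-closure of A (points in the closure of a kappa-small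
   subset of A) is closed in every X_a, using the tightness of a larger X_c
   to replace a kappa-small union of kappa-small sets by a kappa-small set;
   as S is the colimit topology it is S-closed, hence contains cl A. *)

Section ClosureFacts.
Variable T : Type.
Implicit Types (O : set (set T)) (A Y W : set T) (p q : T).

Lemma open_of_not_in_closure_compl Y W O : is_topology Y O ->
  (forall q, W q -> ~ in_closure O (Y `\` W) q) -> O W.
Proof.
move=> [O_sub _ _ _ O_bigcup] W_int.
have -> : W = \bigcup_(U in [set U | O U /\ U `<=` W]) U.
  apply/seteqP; split => [q Wq|q [U [_ UW] Uq]]; last exact: UW.
  apply: contra_notP (W_int q Wq) => no_nbhd U OU Uq.
  apply: contra_notP no_nbhd => UW; exists U => //; split => // x Ux.
  by apply: contra_notP UW => nWx; exists x; split => //; split; [exact: (O_sub U)|].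
by apply: O_bigcup => U [].
Qed.

Lemma in_closure_subspaceE {S : set (set T)} Y A p : Y p -> A `<=` Y ->
  in_closure (subspace_top S Y) A p <-> in_closure S A p.
Proof.
move=> Yp AY; split => [clA U SU Up|clA _ [V [SV ->]] [Vp _]].
- have SUY : subspace_top S Y (U `&` Y) by exists U.
  by have [x [[Ux _] Ax]] := clA _ SUY (conj Up Yp); exists x.
- by have [x [Vx Ax]] := clA V SV Vp; exists x; split => //; split => //; exact: AY.
Qed.

Lemma in_closure_bigcup O (D : set T) (G : T -> set T) q :
  in_closure O D q -> (forall d, D d -> in_closure O (G d) d) ->
  in_closure O (\bigcup_(d in D) G d) q.
Proof.
move=> clD clG U OU Uq.
have [d [Ud Dd]] := clD U OU Uq.
by have [x [Ux Gx]] := clG d Dd U OU Ud; exists x; split => //; exists d.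
Qed.

Lemma tightness_le_subspace (S : set (set T)) (Z Y : set T) (K : Type) :
  Y `<=` Z -> tightness_le Z S K -> tightness_le Y (subspace_top S Y) K.
Proof.
move=> YZ tZ A p AY Yp /(in_closure_subspaceE Yp AY) clA.
have [C [CA CK clC]] := tZ A p (subset_trans AY YZ) (YZ p Yp) clA.
exists C; split => //; apply/in_closure_subspaceE => //.
exact: subset_trans CA AY.
Qed.

Lemma tightness_le_inhabited Y O (K : Type) p :
  is_topology Y O -> tightness_le Y O K -> Y p -> inhabited K.
Proof.
move=> [_ _ OY _ _] tY Yp.
have clY : in_closure O Y p by move=> U _ Up; exists p.
have [C [_ CK clC]] := tY Y p (@subset_refl _ Y) Yp clY.
have [x [_ Cx]] := clC Y OY Yp.
apply: contrapT => noK.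
have K0 : [set: K] = set0 by apply/seteqP; split => // k _; exact/noK/inhabits.
by move: CK; rewrite K0 => /card_le0P C0; rewrite C0 in Cx.
Qed.

Definition kappa_closure (S : set (set T)) (K : Type) A : set T :=
  [set q | exists C, [/\ C `<=` A, (C #<= [set: K])%card & in_closure S C q]].

Lemma subset_kappa_closure (S : set (set T)) (K : Type) A :
  inhabited K -> A `<=` kappa_closure S K A.
Proof.
move=> [k] x Ax; exists [set x]; split => [y -> //| |U _ Ux]; last by exists x.
apply: (card_le_trans (B := [set k])); last exact: subset_card_le.
by have /card_eqPle[] := eq_card1 x k.
Qed.

End ClosureFacts.

Section DirectedFamily.
Variables (K I X : Type) (le : I -> I -> Prop).
Variables (Xa : I -> set X) (tau : I -> set (set X)) (S : set (set X)).
Hypothesis le_directed : forall a b, exists c, le a c /\ le b c.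
Hypothesis Xa_mono : forall a b, le a b -> Xa a `<=` Xa b.
Hypothesis Xa_cover : \bigcup_a Xa a = [set: X].
Hypothesis long : kappa_long le K.
Hypothesis S_top : is_topology [set: X] S.
Hypothesis S_adm : admissible Xa tau S.

Lemma exists_index (x : X) : exists a, Xa a x.
Proof. by have : [set: X] x by []; rewrite -Xa_cover => -[a _ Xx]; exists a. Qed.

Lemma small_set_bounded (C : set X) :
  (C #<= [set: K])%card -> exists b, C `<=` Xa b.
Proof.
move=> CK; have /choice [f Xf] := exists_index.
have [b fb] := long (card_le_trans (card_image_le f C) CK).
by exists b => x Cx; apply: Xa_mono (fb _ (imageP f Cx)) _ (Xf x).
Qed.

Lemma small_bigcup_bounded (D : set X) (G : X -> set X) :
  (D #<= [set: K])%card -> (forall d, D d -> (G d #<= [set: K])%card) ->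
  exists b, \bigcup_(d in D) G d `<=` Xa b.
Proof.
move=> DK GK.
have /choice [h Gh] : forall d, exists a, D d -> G d `<=` Xa a.
  move=> d; case: (pselect (D d)) => [/GK/small_set_bounded [a Ga]|nDd].
    by exists a.
  by have [a _] := exists_index d; exists a.
have [b hb] := long (card_le_trans (card_image_le h D) DK).
by exists b => x [d Dd Gx]; apply: Xa_mono (hb _ (imageP h Dd)) _ (Gh d Dd x Gx).
Qed.

Lemma open_colimit_top (U : set X) : S U -> colimit_top Xa tau U.
Proof. by move=> SU a; rewrite -S_adm; exists U. Qed.

Lemma colimit_top_open (U : set X) :
  tightness_le [set: X] S K -> colimit_top Xa tau U -> S U.
Proof.
move=> tX colU; apply: (open_of_not_in_closure_compl S_top) => q Uq clnU.
have [C [CnU CK clC]] := tX _ q (@subsetT _ _) Logic.I clnU.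
have [b Cb] := small_set_bounded CK.
have [a Xq] := exists_index q.
have [c [bc ac]] := le_directed b a.
have := colU c; rewrite -S_adm => -[V [SV UV]].
have [Vq _] : (V `&` Xa c) q by rewrite -UV; split => //; exact: Xa_mono ac _ Xq.
have [x [Vx Cx]] := clC V SV Vq.
have [Ux _] : (U `&` Xa c) x by rewrite UV; split => //; exact: Xa_mono bc _ (Cb x Cx).
by have [_] := CnU x Cx.
Qed.

Section TightSubspaces.
Hypothesis Xa_top : forall a, is_topology (Xa a) (tau a).
Hypothesis Xa_tight : forall a, tightness_le (Xa a) (subspace_top S (Xa a)) K.

Lemma kappa_closure_small_closure (A D : set X) q :
  (D #<= [set: K])%card -> D `<=` kappa_closure S K A -> in_closure S D q ->
  kappa_closure S K A q.
Proof.
move=> DK DA clD.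
have /choice [g gP] : forall d, exists C, D d ->
    [/\ C `<=` A, (C #<= [set: K])%card & in_closure S C d].
  move=> d; case: (pselect (D d)) => [/DA [C CP]|nDd]; first by exists C.
  by exists set0.
pose A' := \bigcup_(d in D) g d.
have A'A : A' `<=` A by move=> x [d Dd gx]; have [gA _ _] := gP d Dd; exact: gA.
have clA' : in_closure S A' q.
  by apply: in_closure_bigcup clD _ => d Dd; have [_ _ ?] := gP d Dd.
have [b A'b] : exists b, A' `<=` Xa b.
  by apply: small_bigcup_bounded DK _ => d Dd; have [_ ? _] := gP d Dd.
have [a Xq] := exists_index q.
have [c [bc ac]] := le_directed b a.
have A'c : A' `<=` Xa c := subset_trans A'b (Xa_mono bc).
have Xcq : Xa c q by exact: Xa_mono ac _ Xq.
have [C [CA' CK clC]] :=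
  Xa_tight A'c Xcq (proj2 (in_closure_subspaceE Xcq A'c) clA').
exists C; split => //; first exact: subset_trans CA' A'A.
exact/(in_closure_subspaceE Xcq (subset_trans CA' A'c)).
Qed.

Lemma kappa_closure_closed (A : set X) :
  S = colimit_top Xa tau -> S (~` kappa_closure S K A).
Proof.
move=> S_colim; pose B := kappa_closure S K A.
suff : colimit_top Xa tau (~` B) by rewrite -S_colim.
move=> a; apply: (open_of_not_in_closure_compl (Xa_top a)) => q [nBq Xq].
rewrite -S_adm => clq.
have DXa : Xa a `\` (~` B `&` Xa a) `<=` Xa a by move=> x [].
have [D [DW DK clD]] := Xa_tight DXa Xq clq.
apply: nBq; apply: (kappa_closure_small_closure DK).
- by move=> d /DW [Xd nWd]; apply: contrapT => nBd; apply: nWd.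
- by apply/(in_closure_subspaceE Xq (subset_trans DW DXa)).
Qed.

Lemma tightness_le_colimit :
  S = colimit_top Xa tau -> tightness_le [set: X] S K.
Proof.
move=> S_colim A p _ _ clA.
have [a Xp] := exists_index p.
have Xa_subtop : is_topology (Xa a) (subspace_top S (Xa a)) by rewrite S_adm.
have inhK := tightness_le_inhabited Xa_subtop (@Xa_tight a) Xp.
apply: contrapT => nBp.
have [x [nBx Ax]] := clA _ (kappa_closure_closed A S_colim) nBp.
exact/nBx/subset_kappa_closure.
Qed.

End TightSubspaces.
End DirectedFamily.

Theorem proposition2p3 (K : Type) (I : Type) (le : I -> I -> Prop)
  (X : Type) (Xa : I -> set X) (tau : I -> set (set X)) (S : set (set X)) :
  directed_family le Xa tau -> kappa_long le K ->
  is_topology [set: X] S -> admissible Xa tau S ->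
  (tightness_le [set: X] S K <->
   (S = colimit_top Xa tau /\
    forall a, tightness_le (Xa a) (subspace_top S (Xa a)) K)).
Proof.
move=> [_ [_ [_ [le_dir [Xa_top [Xa_mono [_ Xa_cover]]]]]]] long S_top S_adm.
split => [tX | [S_colim Xa_tight]].
- split; last by move=> a; exact: tightness_le_subspace (@subsetT _ _) tX.
  apply/seteqP; split => U; first exact: open_colimit_top.
  exact: (colimit_top_open le_dir Xa_mono Xa_cover long S_top S_adm tX).
- exact: (tightness_le_colimit le_dir Xa_mono Xa_cover long S_adm Xa_top Xa_tight).
Qed.
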